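(* Let $H$ be a $d$-uniform hypergraph, $k$ a field, and fix any term order on $k[t_e: e\in E(H)]$. Every polynomial in the reduced Gröbner basis of $I_H$ with respect to that term order is, up to sign, equal to $f_{\mathcal W}$ for some primitive monomial walk $\mathcal W$ on $H$.
   Context: A hypergraph $H$ on the vertex set $V=\{x_1,\dots,x_n\}$ is $d$-uniform if every edge has exactly $d$ vertices, and each edge $e$ corresponds to the monomial $x^e=\prod_{x_j\in e}x_j$. The toric ideal $I_H$ is the kernel of the ring map $k[t_e: e\in E(H)]\to k[x_1,\dots,x_n]$, $t_e\mapsto x^e$. A monomial walk on $H$ is a sequence $(e_1,\dots,e_{2k})$ of edges of $H$ satisfying: - repetitions are allowed; - each $e_i$ with $i\ge2$ meets $e_1\cup\dots\cup e_{i-1}$; - every covered vertex lies in equally many odd-indexed (blue) as even-indexed (red) edges. Its binomial is $f_{\mathcal W}=\prod_i t_{e_{2i-1}}-\prod_i t_{e_{2i}}$. A bicoloured multiset of edges is balanced if every covered vertex lies in equally many red and blue edges, counted with multiplicity. A monomial walk is primitive if no nonempty proper sub-multiset of its edges, with colours kept, is balanced. *)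

From HB Require Import structures.
From mathcomp Require Import all_boot all_order all_algebra.
Set Implicit Arguments. Unset Strict Implicit. Unset Printing Implicit Defensive.
Import GRing.Theory.
Local Open Scope ring_scope.

(* A monomial t^a is an exponent vector a : E -> nat. *)
Definition mono (E : finType) := {ffun E -> nat}.

Definition mono0 (E : finType) : mono E := [ffun _ => 0%N].
Definition monoM (E : finType) (a b : mono E) : mono E := [ffun e => (a e + b e)%N].
Definition mdvd (E : finType) (a b : mono E) : bool := [forall e, (a e <= b e)%N].

Record mpoly (k : fieldType) (E : finType) := Poly {
  pcoef : mono E -> k;
  psupp : seq (mono E);
  psuppP : forall a, pcoef a != 0 -> a \in psupp }.

Definition pnonzero (k : fieldType) (E : finType) (p : mpoly k E) : Prop :=
  exists a, pcoef p a != 0.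

Definition term_order (E : finType) (lt : rel (mono E)) : Prop :=
  [/\ (forall a, ~~ lt a a),
      (forall a b c, lt a b -> lt b c -> lt a c),
      (forall a b, a != b -> lt a b || lt b a),
      (forall a b c, lt a b -> lt (monoM a c) (monoM b c)) &
      (forall a, a != mono0 E -> lt (mono0 E) a)].

Definition is_lead (k : fieldType) (E : finType) (lt : rel (mono E))
  (p : mpoly k E) (a : mono E) : Prop :=
  pcoef p a != 0 /\ (forall b, pcoef p b != 0 -> b != a -> lt b a).

(* G is the reduced Groebner basis of the ideal I (given as a predicate on
   polynomials) w.r.t. lt:  G is contained in I, in(I) is generated by the
   leading monomials of G (for a monomial ideal: every leading monomial of a
   nonzero element of I is divisible by a leading monomial of some g in G),
   every g is monic, and no monomial of g is divisible by the leading monomial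
   of another element g' of G. *)
Definition reduced_groebner (k : fieldType) (E : finType) (lt : rel (mono E))
  (I : mpoly k E -> Prop) (G : mpoly k E -> Prop) : Prop :=
  [/\ (forall g, G g -> I g),
      (forall g, G g -> exists a, is_lead lt g a /\ pcoef g a = 1),
      (forall f, I f -> pnonzero f ->
          exists g, G g /\ exists a b, [/\ is_lead lt g a, is_lead lt f b & mdvd a b]) &
      (forall g g', G g -> G g' -> (exists c, pcoef g c != pcoef g' c) ->
          forall a c, is_lead lt g' a -> pcoef g c != 0 -> ~~ mdvd a c)].

Definition uniform (V : finType) (d : nat) (H : {set {set V}}) : Prop :=
  forall e, e \in H -> #|e| = d.

(* the edge type (index set of the variables t_e) *)
Notation edge H := {e : {set _} | e \in H}.

(* image of t^a under t_e |-> x^e : the exponent vector of x *)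
Definition timg (V : finType) (H : {set {set V}}) (a : mono (edge H))
  : {ffun V -> nat} :=
  [ffun v => \sum_(e : edge H) a e * (v \in val e)]%N.

(* p is in the kernel I_H of k[t_e] -> k[x], t_e |-> x^e : every coefficient
   of the image polynomial vanishes (this is literally the image of p). *)
Definition in_toric (k : fieldType) (V : finType) (H : {set {set V}})
  (p : mpoly k (edge H)) : Prop :=
  forall b : {ffun V -> nat},
    \sum_(a <- undup (psupp p) | timg a == b) pcoef p a = 0.

(* colouring of the positions of a walk: position i (0-based) gets colour
   odd i; false = blue (odd 1-based index), true = red (even 1-based index) *)
Definition coloured (V : finType) (H : {set {set V}}) (w : seq (edge H))
  : seq (bool * edge H) := zip (mkseq odd (size w)) w.

Definition balanced (V : finType) (H : {set {set V}}) (s : seq (bool * edge H))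
  : Prop :=
  forall v : V, count (fun p : bool * edge H => ~~ p.1 && (v \in val p.2)) s =
                count (fun p : bool * edge H => p.1 && (v \in val p.2)) s.

Definition monomial_walk (V : finType) (H : {set {set V}}) (w : seq (edge H))
  : Prop :=
  [/\ (0 < size w)%N, ~~ odd (size w),
      (forall s1 e s2, w = s1 ++ e :: s2 -> s1 != [::] ->
          has (fun e' : edge H => val e :&: val e' != set0) s1) &
      balanced (coloured w)].

Definition primitive_walk (V : finType) (H : {set {set V}}) (w : seq (edge H))
  : Prop :=
  forall m : bitseq, size m = size w -> has id m -> ~~ all id m ->
    ~ balanced (mask m (coloured w)).

(* exponent of the blue (c = false) / red (c = true) monomial of f_W *)
Definition walk_expo (V : finType) (H : {set {set V}}) (c : bool)
  (w : seq (edge H)) : mono (edge H) :=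
  [ffun e => count (fun p : bool * edge H => (p.1 == c) && (p.2 == e)) (coloured w)].

(* coefficients of f_W = t^(blue) - t^(red) *)
Definition walk_binom (k : fieldType) (V : finType) (H : {set {set V}})
  (w : seq (edge H)) (a : mono (edge H)) : k :=
  (a == walk_expo false w)%:R - (a == walk_expo true w)%:R.

From Pilot Require Import Defs.
From HB Require Import structures.
From mathcomp Require Import all_boot all_order all_algebra.
From Stdlib Require Import Classical.
Import GRing.Theory.

(* 1. An element g of the reduced Groebner basis G with leading monomial t^a
      equals t^a - t^b, where t^b is the least monomial with the same image
      as t^a under t_e |-> x^e: both t^b and the non-leading monomials of g
      are standard, so g - (t^a - t^b), an element of I_H with only standard
      monomials, vanishes ([gb_binomial]).
   2. t^a - t^b is primitive: if t^u | t^a and t^v | t^b have the same image,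
      then (u, v) is (0, 0) or (a, b), since the leading monomial of the
      binomial t^u - t^v or t^(a-u) - t^(b-v) of I_H divides t^a and so is
      t^a by reducedness ([gb_primitive]).
   3. From a primitive pair (a, b) a walk with blue exponent a and red
      exponent b is built greedily: alternately a blue edge of the unused
      part of a and a red edge of the unused part of b meeting the walk so
      far; primitivity and degree counting (d-uniformity) ensure these edges
      exist ([walk_complete]), and primitivity of the pair gives primitivity
      of the walk ([walk_primitive]). *)

Set Implicit Arguments. Unset Strict Implicit.

Section Monomials.
Variable E : finType.

Definition msub (a b : mono E) : mono E := [ffun e => a e - b e].

Definition msize (a : mono E) : nat := \sum_e a e.

Lemma mdvdP (a b : mono E) : reflect (forall e, a e <= b e) (mdvd a b).
Proof. exact: forallP. Qed.

Lemma mdvd_trans (a b c : mono E) : mdvd a b -> mdvd b c -> mdvd a c.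
Proof. by move=> /mdvdP ab /mdvdP bc; apply/mdvdP => e; apply: leq_trans (ab e) (bc e). Qed.

Lemma monoMC (a b : mono E) : monoM a b = monoM b a.
Proof. by apply/ffunP => e; rewrite !ffunE addnC. Qed.

Lemma monoM0 (a : mono E) : monoM a (mono0 E) = a.
Proof. by apply/ffunP => e; rewrite !ffunE addn0. Qed.

Lemma mono0M (a : mono E) : monoM (mono0 E) a = a.
Proof. by rewrite monoMC monoM0. Qed.

Lemma monoMA (a b c : mono E) : monoM a (monoM b c) = monoM (monoM a b) c.
Proof. by apply/ffunP => e; rewrite !ffunE addnA. Qed.

Lemma mdvd_monoMr (a b : mono E) : mdvd a (monoM a b).
Proof. by apply/mdvdP => e; rewrite ffunE leq_addr. Qed.

Lemma monoM_msub (a b : mono E) : mdvd b a -> monoM b (msub a b) = a.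
Proof. by move/mdvdP => h; apply/ffunP => e; rewrite !ffunE subnKC. Qed.

Lemma mdvd_msub (a b : mono E) : mdvd (msub a b) a.
Proof. by apply/mdvdP => e; rewrite ffunE leq_subr. Qed.

Lemma msizeM (a b : mono E) : msize (monoM a b) = msize a + msize b.
Proof. by rewrite /msize -big_split; apply: eq_bigr => e _; rewrite ffunE. Qed.

Lemma msize_eq0 (a : mono E) : msize a = 0 -> a = mono0 E.
Proof.
move/eqP; rewrite sum_nat_eq0 => /forallP h.
by apply/ffunP => e; rewrite ffunE; apply/eqP; apply: h.
Qed.

Lemma monoM_eq_l (a r : mono E) : monoM a r = a -> r = mono0 E.
Proof.
move/(congr1 msize); rewrite msizeM -[RHS]addn0 => /addnI; exact: msize_eq0.
Qed.

Lemma mono_neq0 (r : mono E) : r != mono0 E -> exists e, 0 < r e.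
Proof.
move=> nz; case: (pickP (fun e => 0 < r e)) => [e he|h0]; first by exists e.
by case/eqP: nz; apply/ffunP => e; rewrite ffunE; move: (h0 e); case: (r e).
Qed.

Lemma msize_mono0 : msize (mono0 E) = 0.
Proof. by apply/eqP; rewrite sum_nat_eq0; apply/forallP => e; rewrite ffunE. Qed.
End Monomials.

Section TermOrder.
Variables (E : finType) (lt : rel (mono E)) (hlt : term_order lt).

Lemma lt_irr a : ~~ lt a a.
Proof. by case: hlt. Qed.

Lemma lt_trans a b c : lt a b -> lt b c -> lt a c.
Proof. by case: hlt => _ h _ _ _; apply: h. Qed.

Lemma lt_total a b : a != b -> lt a b || lt b a.
Proof. by case: hlt => _ _ h _ _; apply: h. Qed.

Lemma lt_monoMr a b c : lt a b -> lt (monoM a c) (monoM b c).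
Proof. by case: hlt => _ _ _ h _; apply: h. Qed.

Lemma lt_monoMl a b c : lt a b -> lt (monoM c a) (monoM c b).
Proof. by move=> h; rewrite ![monoM c _]monoMC; apply: lt_monoMr. Qed.

Lemma lt_asym a b : lt a b -> ~~ lt b a.
Proof. by move=> h; apply/negP => /(lt_trans h); apply/negP/lt_irr. Qed.

Lemma lt_neq a b : lt a b -> a != b.
Proof. by move=> h; apply: contraTneq h => ->; apply: lt_irr. Qed.

Definition mle (a b : mono E) : bool := (a == b) || lt a b.

Lemma mleNlt a b : mle a b = ~~ lt b a.
Proof.
rewrite /mle; case: eqVneq => [->|ne] /=; first by rewrite lt_irr.
by case/orP: (lt_total ne) => h; rewrite h ?(negbTE (lt_asym h)) //; apply/esym/lt_asym.
Qed.

Lemma mle_lt_trans a b c : mle a b -> lt b c -> lt a c.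
Proof. by case/orP => [/eqP ->//|]; apply: lt_trans. Qed.

Lemma mle_monoM a1 b1 a2 b2 :
  mle a1 b1 -> mle a2 b2 -> mle (monoM a1 a2) (monoM b1 b2).
Proof.
case/orP => [/eqP ->|l1] /orP [/eqP ->|l2]; rewrite /mle ?eqxx //; apply/orP; right.
- exact: lt_monoMl.
- exact: lt_monoMr.
- exact: lt_trans (lt_monoMr _ l1) (lt_monoMl _ l2).
Qed.

(* a divisor is never larger: 1 is the least monomial *)
Lemma mdvd_mle a b : mdvd a b -> mle a b.
Proof.
move=> dab; rewrite -(monoM_msub dab) -{1}[a]monoM0 /mle.
case: (eqVneq (msub b a) (mono0 E)) => [->|nz]; first by rewrite eqxx.
by rewrite lt_monoMl ?orbT //; case: hlt => _ _ _ _; apply.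
Qed.

Lemma lead_uniq (k : fieldType) (p : mpoly k E) a b :
  is_lead lt p a -> is_lead lt p b -> a = b.
Proof.
move=> [pa la] [pb lb]; apply/eqP/negPn/negP => ne.
by have := lt_asym (lb a pa ne); rewrite la // eq_sym.
Qed.

Lemma seq_min (s : seq (mono E)) x : x \in s ->
  exists2 m, m \in s & forall y, y \in s -> mle m y.
Proof.
elim: s x => [//|y s IH] x _.
case: s IH => [|z s] IH.
  by exists y; rewrite ?mem_head // => y'; rewrite inE => /eqP ->; rewrite /mle eqxx.
have [m ms hm] := IH z (mem_head _ _).
case: (boolP (lt y m)) => [ym|]; last rewrite -mleNlt => my.
  exists y; first exact: mem_head.
  move=> y'; rewrite inE => /orP [/eqP ->|/hm my']; first by rewrite /mle eqxx.
  by case/orP: my' => [/eqP <-|/(lt_trans ym) yy']; rewrite /mle ?ym ?yy' orbT.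
exists m; first by rewrite inE ms orbT.
by move=> y'; rewrite inE => /orP [/eqP ->|/hm].
Qed.
End TermOrder.

Section Polynomials.
Local Open Scope ring_scope.
Variables (k : fieldType) (E : finType).

Lemma sum_partner (s : seq (mono E)) (P : pred (mono E)) (F : mono E -> k) x :
  uniq s -> \sum_(y <- s | P y) F y = 0 -> x \in s -> P x -> F x != 0 ->
  exists y, [/\ y \in s, y != x, P y & F y != 0].
Proof.
move=> us hs xs Px Fx.
case: (boolP (has (fun y => [&& y != x, P y & F y != 0]) s)).
  by case/hasP => y ys /and3P [h1 h2 h3]; exists y.
move/hasPn => hn; exfalso; move/eqP: Fx; apply.
rewrite big_mkcond (bigD1_seq x) //= Px in hs.
rewrite -[F x]addr0 -{2}hs; congr (_ + _).
rewrite big_seq_cond; apply/esym/big1 => y /andP [ys nyx].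
case: ifP => // Py; apply/eqP/negPn/negP => h.
by move: (hn y ys); rewrite nyx Py h.
Qed.

Lemma sum_supp (s t : seq (mono E)) (P : pred (mono E)) (F : mono E -> k) :
  uniq s -> uniq t -> (forall x, F x != 0 -> x \in s) ->
  (forall x, F x != 0 -> x \in t) ->
  \sum_(y <- s | P y) F y = \sum_(y <- t | P y) F y.
Proof.
move=> us ut hs ht; apply: perm_big_supp; apply: uniq_perm; rewrite ?filter_uniq //.
by move=> x; rewrite !mem_filter; case: (boolP (F x != 0)) => //= /[dup] /hs -> /ht ->.
Qed.

Definition binom (u v : mono E) : mpoly k E.
refine (@Defs.Poly _ _ (fun x => (x == u)%:R - (x == v)%:R) [:: u; v] _).
by move=> a; rewrite !inE; case: (a == u); case: (a == v); rewrite //= subrr eqxx.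
Defined.

Lemma binomE u v x : pcoef (binom u v) x = (x == u)%:R - (x == v)%:R.
Proof. by []. Qed.

Lemma binom_lead (lt : rel (mono E)) u v : v != u -> lt v u ->
  is_lead lt (binom u v) u.
Proof.
move=> nvu lvu; split.
  by rewrite binomE eqxx (eq_sym u v) (negbTE nvu) subr0 oner_eq0.
move=> c; rewrite binomE; case: (eqVneq c u) => [->|_]; first by [].
by case: (eqVneq c v) => [->|_] //; rewrite subrr eqxx.
Qed.

Definition psub (p q : mpoly k E) : mpoly k E.
refine (@Defs.Poly _ _ (fun x => pcoef p x - pcoef q x) (psupp p ++ psupp q) _).
move=> a; rewrite mem_cat => h.
case: (boolP (pcoef p a != 0)) => [/psuppP -> //|]; rewrite negbK => /eqP hp.
by rewrite hp sub0r oppr_eq0 in h; rewrite (psuppP h) orbT.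
Defined.

Lemma psubE p q x : pcoef (psub p q) x = pcoef p x - pcoef q x.
Proof. by []. Qed.
End Polynomials.

Section Toric.
Local Open Scope ring_scope.
Variables (V : finType) (H : {set {set V}}).

Lemma timgM (a b : mono (edge H)) v : timg (monoM a b) v = (timg a v + timg b v)%N.
Proof. by rewrite !ffunE -big_split; apply: eq_bigr => e _; rewrite ffunE mulnDl. Qed.

Lemma timg_mono0 v : timg (mono0 (edge H)) v = 0%N.
Proof. by rewrite ffunE big1 // => e _; rewrite ffunE. Qed.

Lemma timg_ge (a : mono (edge H)) (e : edge H) v : v \in val e -> (a e <= timg a v)%N.
Proof. by move=> ve; rewrite ffunE (bigD1 e) //= ve muln1 leq_addr. Qed.

Lemma timg_mdvd (x y : mono (edge H)) v : mdvd x y -> (timg x v <= timg y v)%N.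
Proof. by move/monoM_msub => <-; rewrite timgM leq_addr. Qed.

Lemma timg_msub (a b : mono (edge H)) v : mdvd b a ->
  timg (msub a b) v = (timg a v - timg b v)%N.
Proof. by move/monoM_msub => {2}<-; rewrite timgM addKn. Qed.

Variable k : fieldType.

Lemma binom_toric (u v : mono (edge H)) : timg u = timg v -> in_toric (binom k u v).
Proof.
move=> huv b; case: (eqVneq u v) => [<-|nuv].
  by apply: big1 => x _; rewrite binomE subrr.
rewrite /= mem_seq1 (negbTE nuv) !big_cons big_nil /=.
rewrite !eqxx (negbTE nuv) (eq_sym v u) (negbTE nuv) huv addr0.
by case: (timg v == b); rewrite ?subr0 ?sub0r ?addrN.
Qed.

Lemma toric_partner (p : mpoly k (edge H)) x : in_toric p -> pcoef p x != 0 ->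
  exists y, [/\ y != x, pcoef p y != 0 & timg y = timg x].
Proof.
move=> hp px.
have [|y [_ h1 h2 h3]] := sum_partner (undup_uniq _) (hp (timg x)) _ (eqxx _) px.
  by rewrite mem_undup psuppP.
by exists y; split => //; apply/eqP.
Qed.

Lemma toric_sub (p q : mpoly k (edge H)) : in_toric p -> in_toric q -> in_toric (psub p q).
Proof.
move=> hp hq b; rewrite /= sumrB.
have cover (r : mpoly k (edge H)) (s : seq (mono (edge H))) :
    (forall x, pcoef r x != 0 -> x \in s) -> forall x, pcoef r x != 0 -> x \in undup s.
  by move=> hs x /hs; rewrite mem_undup.
have inp x : pcoef p x != 0 -> x \in psupp p ++ psupp q.
  by move/psuppP; rewrite mem_cat => ->.
have inq x : pcoef q x != 0 -> x \in psupp p ++ psupp q.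
  by move/psuppP; rewrite mem_cat orbC => ->.
rewrite (sum_supp _ (undup_uniq _) (undup_uniq _) (cover p _ inp)
  (cover p _ (@psuppP _ _ p))).
rewrite (sum_supp _ (undup_uniq _) (undup_uniq _) (cover q _ inq)
  (cover q _ (@psuppP _ _ q))).
by rewrite hp hq subrr.
Qed.
End Toric.

Section UniformToric.
Variables (V : finType) (d : nat) (H : {set {set V}}).
Hypotheses (hd : 0 < d) (hH : uniform d H).

Lemma edge_nonempty (e : edge H) : exists v, v \in val e.
Proof. by apply/card_gt0P; rewrite (hH (valP e)). Qed.

Lemma timg_eq0 (a : mono (edge H)) : (forall v, timg a v = 0) -> a = mono0 _.
Proof.
move=> h; apply/ffunP => e; rewrite ffunE; have [v ve] := edge_nonempty e.
by apply/eqP; rewrite -leqn0 -(h v) timg_ge.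
Qed.

Lemma sum_timg (a : mono (edge H)) : \sum_v timg a v = d * msize a.
Proof.
under eq_bigr do rewrite ffunE.
rewrite exchange_big big_distrr /=; apply: eq_bigr => e _.
rewrite -big_distrr /= mulnC; congr (_ * _).
rewrite -(hH (valP e)) -sum1_card [RHS]big_mkcond /=.
by apply: eq_bigr => v _; case: (v \in val e).
Qed.

Lemma msize_timg (a b : mono (edge H)) : timg a = timg b -> msize a = msize b.
Proof. by move=> h; apply/eqP; rewrite -(eqn_pmul2l hd) -!sum_timg h. Qed.

Lemma fiber_finite (a : mono (edge H)) :
  exists L : seq (mono (edge H)), forall c, (c \in L) = (timg c == timg a).
Proof.
pose N := \sum_v timg a v.
pose F (f : {ffun edge H -> 'I_N.+1}) : mono (edge H) := [ffun e => nat_of_ord (f e)].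
exists [seq c <- map F (enum {ffun edge H -> 'I_N.+1}) | timg c == timg a].
move=> c; rewrite mem_filter; case: eqP => //= tc.
suff -> : c = F [ffun e => inord (c e)] by rewrite map_f ?mem_enum.
apply/ffunP => e; rewrite !ffunE inordK //; have [v ve] := edge_nonempty e.
by rewrite ltnS (leq_trans (timg_ge c ve)) // tc /N (bigD1 v) //= leq_addr.
Qed.
End UniformToric.

Definition primitive_pair (V : finType) (H : {set {set V}}) (a b : mono (edge H))
  : Prop :=
  forall u v, mdvd u a -> mdvd v b -> timg u = timg v ->
  (u = mono0 _ /\ v = mono0 _) \/ (u = a /\ v = b).

Section ReducedGroebner.
Local Open Scope ring_scope.
Variables (k : fieldType) (V : finType) (d : nat) (H : {set {set V}}).
Hypotheses (hd : (0 < d)%N) (hH : uniform d H).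
Variables (lt : rel (mono (edge H))) (G : mpoly k (edge H) -> Prop).
Hypotheses (hlt : term_order lt) (hG : reduced_groebner lt (@in_toric k V H) G).

Definition standard (m : mono (edge H)) : Prop :=
  forall g a, G g -> is_lead lt g a -> ~~ mdvd a m.

Lemma gb_lead_cases g g' a' : G g -> G g' -> is_lead lt g' a' ->
  is_lead lt g a' \/ (forall c, pcoef g c != 0 -> ~~ mdvd a' c).
Proof.
move=> Gg Gg' la'; case: hG => _ _ _ G4.
case: (classic (exists c, pcoef g c != pcoef g' c)) => [hc|hc]; [right|left].
  by move=> c; apply: G4 Gg Gg' hc _ _ la'.
have same c : pcoef g c = pcoef g' c by apply/eqP/negPn/negP => ne; apply: hc; exists c.
by case: la' => h1 h2; split => [|c]; rewrite same // => /h2.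
Qed.

Lemma gb_lead_mdvd g g' a a' : G g -> G g' -> is_lead lt g a -> is_lead lt g' a' ->
  mdvd a' a -> a' = a.
Proof.
move=> Gg Gg' la la' dv; case: (gb_lead_cases Gg Gg' la') => [la2|nd].
  exact: (lead_uniq hlt la2 la).
by case: la => ga _; move: (nd a ga); rewrite dv.
Qed.

Lemma gb_tail_standard g a m : G g -> is_lead lt g a -> pcoef g m != 0 -> m != a ->
  standard m.
Proof.
move=> Gg la gm nma g' a' Gg' la'; case: (gb_lead_cases Gg Gg' la') => [la2|]; last exact.
rewrite (lead_uniq hlt la2 la); apply/negP => /(mdvd_mle hlt).
by rewrite mleNlt //; case: la => _ /(_ m gm nma) ->.
Qed.

Lemma toric_standard_eq0 (f : mpoly k (edge H)) :
  in_toric f -> (forall m, pcoef f m != 0 -> standard m) -> forall m, pcoef f m = 0.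
Proof.
move=> If hst m; apply/eqP/negPn/negP => fm; case: hG => _ _ G3 _.
have [g [Gg [a [b [la [fb _] dv]]]]] := G3 f If (ex_intro _ m fm).
by move: (hst b fb g a Gg la); rewrite dv.
Qed.

(* the least monomial of a fibre of the monomial map is standard: otherwise
   a binomial of G would rewrite it to a smaller monomial of the same image *)
Lemma fiber_min_standard b : (forall c, timg c = timg b -> mle lt b c) -> standard b.
Proof.
move=> bmin g a Gg [ga la]; apply/negP => dv; case: hG => G1 _ _ _.
have [c [nca gc tca]] := toric_partner (G1 _ Gg) ga.
have lcb : lt (monoM c (msub b a)) b.
  by rewrite -{2}(monoM_msub dv); apply: lt_monoMr => //; apply: la.
suff /bmin : timg (monoM c (msub b a)) = timg b by rewrite mleNlt // lcb.
by apply/ffunP => v; rewrite -{2}(monoM_msub dv) !timgM tca.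
Qed.

Lemma gb_binomial g a b : G g -> is_lead lt g a -> pcoef g a = 1 ->
  timg b = timg a -> (forall c, timg c = timg a -> mle lt b c) ->
  lt b a /\ forall x, pcoef g x = (x == a)%:R - (x == b)%:R.
Proof.
move=> Gg la ga1 tba bmin; case: hG => G1 _ _ _.
have lba : lt b a.
  case: la => ga l; have [y [nya gy tya]] := toric_partner (G1 _ Gg) ga.
  exact: (mle_lt_trans hlt (bmin y tya) (l y gy nya)).
have nba : b != a := lt_neq hlt lba.
split=> // x; apply/eqP; rewrite -subr_eq0; apply/eqP.
apply: (@toric_standard_eq0 (psub g (binom k a b))) x.
  exact: toric_sub (G1 _ Gg) (binom_toric k (esym tba)).
move=> m; rewrite psubE binomE.
case: (eqVneq m a) => [->|nma].
  by rewrite ga1 (eq_sym a b) (negbTE nba) subr0 subrr eqxx.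
case: (eqVneq m b) => [-> _|_].
  by apply: fiber_min_standard => c; rewrite tba; apply: bmin.
by rewrite subrr subr0 => gm; apply: gb_tail_standard Gg la gm nma.
Qed.

Lemma gb_lead_binomial g a u v : G g -> is_lead lt g a -> mdvd u a ->
  timg u = timg v -> lt v u -> u = a.
Proof.
move=> Gg la dua tuv lvu; case: hG => _ _ G3 _.
have lu := binom_lead k (lt_neq hlt lvu) lvu.
have [g' [Gg' [a' [u' [la' lu' dv]]]]] :=
  G3 _ (binom_toric k tuv) (ex_intro _ u (proj1 lu)).
rewrite (lead_uniq hlt lu' lu) in dv.
have ea' : a' = a := gb_lead_mdvd Gg Gg' la la' (mdvd_trans dv dua).
apply/ffunP => e; apply/eqP; rewrite eqn_leq (mdvdP _ _ dua e) /=.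
by rewrite -ea'; move/mdvdP: dv.
Qed.

(* a binomial t^a - t^b of G is primitive: for a splitting t^u - t^v with
   v < u the binomial t^u - t^v forces u = a, hence v = b; otherwise the
   complementary binomial t^(a-u) - t^(b-v) forces a - u = a, hence u = v = 0 *)
Lemma gb_primitive g a b : G g -> is_lead lt g a -> timg a = timg b -> lt b a ->
  primitive_pair a b.
Proof.
move=> Gg la tab lba u v ua vb tuv.
have key := gb_lead_binomial Gg la.
case: (boolP (lt v u)) => [lvu|].
  have eua := key _ _ ua tuv lvu; right; split => //.
  have bv0 : msub b v = mono0 _.
    by apply: (timg_eq0 hd hH) => x; rewrite timg_msub // -tab -eua tuv subnn.
  by rewrite -(monoM_msub vb) bv0 monoM0.
rewrite -mleNlt // => muv; left.
have lsub : lt (msub b v) (msub a u).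
  apply/negPn/negP; rewrite -mleNlt // => mab.
  by have := mle_monoM hlt muv mab; rewrite !monoM_msub // mleNlt // lba.
have tsub : timg (msub a u) = timg (msub b v).
  by apply/ffunP => x; rewrite !timg_msub // tab tuv.
have eau := key _ _ (mdvd_msub a u) tsub lsub.
have u0 : u = mono0 _.
  by apply: (@monoM_eq_l _ a); rewrite monoMC -[X in monoM u X]eau monoM_msub.
split=> //; apply: (timg_eq0 hd hH) => x.
by rewrite -tuv u0 timg_mono0.
Qed.

Theorem gb_element_binomial g : G g -> exists a b, [/\ lt b a, timg a = timg b,
  (forall x, pcoef g x = (x == a)%:R - (x == b)%:R) & primitive_pair a b].
Proof.
move=> Gg; case: hG => _ G2 _ _.
have [a [la ga1]] := G2 g Gg.
have [L HL] := fiber_finite hd hH a.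
have aL : a \in L by rewrite HL.
have [b bL bmin] := seq_min hlt aL.
have tba : timg b = timg a by apply/eqP; rewrite -HL.
have [|lba gE] := gb_binomial Gg la ga1 tba.
  by move=> c tc; apply: bmin; rewrite HL tc.
exists a, b; split => //; exact: gb_primitive Gg la (esym tba) lba.
Qed.
End ReducedGroebner.

Section ImageOrder.
Variables (V : finType) (d : nat) (H : {set {set V}}).
Hypotheses (hd : 0 < d) (hH : uniform d H).

Lemma timg_le_msize (x y : mono (edge H)) :
  (forall v, timg x v <= timg y v) -> msize x <= msize y.
Proof.
by move=> le; rewrite -(leq_pmul2l hd) -!(sum_timg hH); apply: leq_sum => v _.
Qed.

Lemma timg_le_eq (x y : mono (edge H)) :
  (forall v, timg x v <= timg y v) -> msize x = msize y -> timg x = timg y.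
Proof.
move=> le eqs; have := leqif_sum (fun v (_ : true) => leqif_eq (le v)).
rewrite !(sum_timg hH) eqs => -[_]; rewrite eqxx => /esym/forallP h.
by apply/ffunP => v; apply/eqP; apply: h.
Qed.
End ImageOrder.

Section Walks.
Variables (V : finType) (H : {set {set V}}).

Definition cexpo (c : bool) (s : seq (bool * edge H)) : mono (edge H) :=
  [ffun e => count (fun p : bool * edge H => (p.1 == c) && (p.2 == e)) s].

Definition meets (e : edge H) : pred (edge H) := fun e' => val e :&: val e' != set0.

Definition walk_conn (w : seq (edge H)) : Prop :=
  forall s1 e s2, w = s1 ++ e :: s2 -> s1 != [::] -> has (meets e) s1.

Definition delta (e : edge H) : mono (edge H) := [ffun x => nat_of_bool (x == e)].

Lemma count_timg c s v :
  count (fun p : bool * edge H => (p.1 == c) && (v \in val p.2)) s = timg (cexpo c s) v.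
Proof.
elim: s => [|p s IH]; first by rewrite /= ffunE big1 // => e _; rewrite ffunE.
rewrite /= IH !ffunE; under [RHS]eq_bigr => e _ do rewrite ffunE /= mulnDl.
rewrite big_split /=; congr (_ + _); last by apply: eq_bigr => e _; rewrite ffunE.
rewrite (bigD1 p.2) //= eqxx andbT big1 ?addn0 => [|e ne].
  by case: (p.1 == c); case: (v \in _).
by rewrite eq_sym in ne; rewrite (negbTE ne) andbF.
Qed.

Lemma balancedP s : balanced s <-> timg (cexpo false s) = timg (cexpo true s).
Proof.
have colour c v : count (fun p : bool * edge H => (p.1 == c) && (v \in val p.2)) s =
    count (fun p : bool * edge H => (if c then p.1 else ~~ p.1) && (v \in val p.2)) s.
  by apply: eq_count => p; case: c; case: p.1.
split => [bal|h v]; first by apply/ffunP => v; rewrite -!count_timg !colour.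
by move/ffunP: h => /(_ v); rewrite -!count_timg !colour.
Qed.

Lemma cexpo_nil c : cexpo c [::] = mono0 _.
Proof. by apply/ffunP => e; rewrite !ffunE. Qed.

Lemma cexpo_cat c s t : cexpo c (s ++ t) = monoM (cexpo c s) (cexpo c t).
Proof. by apply/ffunP => e; rewrite !ffunE count_cat. Qed.

Lemma cexpo_eq0 s : cexpo false s = mono0 _ -> cexpo true s = mono0 _ -> s = [::].
Proof.
case: s => [//|[c e] t] h0 h1; have : 0 < cexpo c ((c, e) :: t) e by rewrite ffunE /= !eqxx.
by case: c h0 h1 => [_ ->|-> _]; rewrite ffunE.
Qed.

Lemma coloured_cat (s t : seq (edge H)) : ~~ odd (size s) ->
  coloured (s ++ t) = coloured s ++ coloured t.
Proof.
move=> ev; rewrite /coloured size_cat /mkseq iotaD map_cat zip_cat; last first.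
  by rewrite size_map size_iota.
congr (_ ++ zip _ _); rewrite add0n -[size s]addn0 iotaDl -map_comp.
by apply: eq_map => i /=; rewrite oddD (negbTE ev).
Qed.

Lemma cexpo_append c (w : seq (edge H)) (e1 e2 : edge H) : ~~ odd (size w) ->
  cexpo c (coloured (w ++ [:: e1; e2])) =
  monoM (cexpo c (coloured w)) (delta (if c then e2 else e1)).
Proof.
move=> ev; rewrite coloured_cat // cexpo_cat; congr (monoM _ _).
by apply/ffunP => e; case: c; rewrite !ffunE /= !addn0 ?add0n eq_sym.
Qed.

Lemma msize_delta e : msize (delta e) = 1.
Proof.
by rewrite /msize (bigD1 e) //= big1 => [|e' ne]; rewrite ffunE ?eqxx // (negbTE ne).
Qed.

Lemma timg_delta e v : timg (delta e) v = (v \in val e).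
Proof.
rewrite ffunE (bigD1 e) //= big1 => [|e' ne]; first by rewrite ffunE eqxx mul1n addn0.
by rewrite ffunE (negbTE ne).
Qed.

Lemma mdvd_delta (e : edge H) (r : mono (edge H)) : 0 < r e -> mdvd (delta e) r.
Proof. by move=> h; apply/mdvdP => e'; rewrite ffunE; case: eqP => [->|]. Qed.

Lemma walk_conn_nil : walk_conn [::].
Proof. by case. Qed.

Lemma walk_conn_rcons w e : walk_conn w -> (w != [::] -> has (meets e) w) ->
  walk_conn (rcons w e).
Proof.
move=> cw he s1 e' s2; case/lastP: s2 => [|s2 x].
  by rewrite cats1 => /rcons_inj [<- <-].
by rewrite -rcons_cons -rcons_cat => /rcons_inj [/cw].
Qed.

Lemma coloured_edges (w : seq (edge H)) : unzip2 (coloured w) = w.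
Proof. by rewrite unzip2_zip // size_mkseq. Qed.

Lemma timg_uncovered c w v : ~~ has (fun e' : edge H => v \in val e') w ->
  timg (cexpo c (coloured w)) v = 0.
Proof.
move=> hn; rewrite -count_timg -(count_pred0 (coloured w)); apply: eq_in_count.
case=> c' e' ce /=.
have e'w : e' \in w by rewrite -(coloured_edges w); apply: (map_f snd ce).
suff /negbTE -> : v \notin val e' by rewrite andbF.
by apply: contra hn => ve; apply/hasP; exists e'.
Qed.

Lemma timg_covered (r : mono (edge H)) w v :
  (forall e, 0 < r e -> ~~ has (meets e) w) ->
  has (fun e' : edge H => v \in val e') w -> timg r v = 0.
Proof.
move=> hno /hasP [e' e'w ve']; rewrite ffunE; apply: big1 => e _.
case: (posnP (r e)) => [->//|pe]; case ve: (v \in val e); last by rewrite muln0.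
by move: (hno e pe); case/hasP; exists e' => //; apply/set0Pn; exists v; rewrite inE ve.
Qed.

Lemma count_mask_split (P : pred (bool * edge H)) (m : bitseq) s :
  size m = size s -> count P (mask m s) + count P (mask (map negb m) s) = count P s.
Proof.
elim: m s => [|b m IH] [|p s] //= [hs].
by case: b; rewrite /= -(IH s hs); case: (P p); rewrite /= ?addnS ?addSn.
Qed.
End Walks.

(* The walk is built by adding alternately a blue edge from
   the unused part of a and a red edge from the unused part of b, each
   meeting the walk built so far: primitivity guarantees that a suitable
   blue edge exists, counting degrees that a suitable red edge exists. *)
Section WalkConstruction.
Variables (V : finType) (d : nat) (H : {set {set V}}).
Hypotheses (hd : 0 < d) (hH : uniform d H).
Variables (a b : mono (edge H)).
Hypotheses (tab : timg a = timg b) (prim : primitive_pair a b).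

(* w is the walk built so far and ra, rb are the unused parts of a and b;
   both colour classes of w have the same degree *)
Section Step.
Variables (w : seq (edge H)) (ra rb : mono (edge H)).
Local Notation blue := (cexpo false (coloured w)).
Local Notation red := (cexpo true (coloured w)).
Hypotheses (ha : monoM (blue) ra = a)
  (hb : monoM (red) rb = b)
  (hs : msize (blue) = msize (red)).

Lemma timg_state v :
  timg (blue) v + timg ra v = timg (red) v + timg rb v.
Proof. by rewrite -!timgM ha hb tab. Qed.

Lemma next_blue : ra != mono0 _ -> exists2 e1, 0 < ra e1 & (w != [::] -> has (meets e1) w).
Proof.
move=> nra; case: (eqVneq w [::]) => [-> | wn].
  by have [e1 p1] := mono_neq0 nra; exists e1.
case: (boolP [exists e, (0 < ra e) && has (meets e) w]).
  by case/existsP => e1 /andP []; exists e1.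
rewrite negb_exists => /forallP hno; exfalso.
have off e : 0 < ra e -> ~~ has (meets e) w by move=> pe; move: (hno e); rewrite pe.
have le v : timg (red) v <= timg (blue) v.
  have [cov|ncov] := boolP (has (fun e' : edge H => v \in val e') w).
    by rewrite -[leqRHS]addn0 -(timg_covered off cov) timg_state leq_addr.
  by rewrite !timg_uncovered.
have teq := timg_le_eq hH le (esym hs).
have dva : mdvd (blue) a by rewrite -ha mdvd_monoMr.
have dvb : mdvd (red) b by rewrite -hb mdvd_monoMr.
have [[u0 v0]|[ua _]] := prim dva dvb (esym teq).
  by move: wn; rewrite -(coloured_edges w) (cexpo_eq0 u0 v0).
by have := ha; rewrite -ua => /monoM_eq_l ra0; rewrite ra0 eqxx in nra.
Qed.

Lemma next_red e1 : 0 < ra e1 -> exists2 e2, 0 < rb e2 & has (meets e2) (rcons w e1).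
Proof.
move=> p1; case: (boolP [exists e, (0 < rb e) && has (meets e) (rcons w e1)]).
  by case/existsP => e2 /andP []; exists e2.
rewrite negb_exists => /forallP hno; exfalso.
have off e : 0 < rb e -> ~~ has (meets e) (rcons w e1).
  by move=> pe; move: (hno e); rewrite pe.
have le v : timg (monoM (blue) (delta e1)) v <= timg (red) v.
  rewrite timgM; have [cov|] := boolP (has (fun e' : edge H => v \in val e') (rcons w e1)).
    rewrite -[leqRHS]addn0 -(timg_covered off cov) -timg_state leq_add2l.
    exact: timg_mdvd (mdvd_delta p1).
  by rewrite has_rcons negb_or timg_delta => /andP [/negbTE -> /timg_uncovered ->].
by have := timg_le_msize hd hH le; rewrite msizeM msize_delta hs addn1 ltnn.
Qed.
End Step.

Lemma walk_complete n w ra rb : msize ra = n -> ~~ odd (size w) ->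
  monoM (cexpo false (coloured w)) ra = a -> monoM (cexpo true (coloured w)) rb = b ->
  msize (cexpo false (coloured w)) = msize (cexpo true (coloured w)) -> walk_conn w ->
  exists w', [/\ ~~ odd (size w'), cexpo false (coloured w') = a,
                 cexpo true (coloured w') = b & walk_conn w'].
Proof.
elim: n w ra rb => [|n IH] w ra rb hn ev ha hb hs cw.
  have rb0 : msize rb = 0.
    have := msize_timg hd hH tab; rewrite -ha -hb !msizeM hn hs addn0 => e.
    by rewrite -(addKn (msize (cexpo true (coloured w))) (msize rb)) -e subnn.
  by exists w; rewrite -ha -hb (msize_eq0 hn) (msize_eq0 rb0) !monoM0.
have nra : ra != mono0 _ by apply/eqP => ra0; move: hn; rewrite ra0 msize_mono0.
have [e1 p1 c1] := next_blue ha hb hs nra.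
have [e2 p2 c2] := next_red ha hb hs p1.
have d1 := mdvd_delta p1; have d2 := mdvd_delta p2.
apply: (IH (w ++ [:: e1; e2]) (msub ra (delta e1)) (msub rb (delta e2))).
- by have := congr1 (@msize _) (monoM_msub d1); rewrite msizeM msize_delta hn add1n => -[].
- by rewrite size_cat /= addn2 /= negbK.
- by rewrite cexpo_append // -monoMA monoM_msub.
- by rewrite cexpo_append // -monoMA monoM_msub.
- by rewrite (cexpo_append false e1 e2 ev) (cexpo_append true e1 e2 ev)
    [LHS]msizeM [RHS]msizeM !msize_delta hs.
- by rewrite -cat_rcons cats1; apply: walk_conn_rcons (walk_conn_rcons cw c1) _.
Qed.

(* a proper nonempty balanced sub-multiset would split t^a - t^b *)
Lemma walk_primitive w : cexpo false (coloured w) = a -> cexpo true (coloured w) = b ->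
  primitive_walk w.
Proof.
move=> ha hb m sm hm ham /balancedP bal; set s := coloured w in ha hb bal.
have ss : size m = size s by rewrite sm /s /coloured size_zip size_mkseq minnn.
have split c : monoM (cexpo c (mask m s)) (cexpo c (mask (map negb m) s)) = cexpo c s.
  by apply/ffunP => e; rewrite !ffunE count_mask_split.
have dv c : mdvd (cexpo c (mask m s)) (cexpo c s) by rewrite -split mdvd_monoMr.
have dva : mdvd (cexpo false (mask m s)) a by rewrite -ha dv.
have dvb : mdvd (cexpo true (mask m s)) b by rewrite -hb dv.
have [[u0 v0]|[ua vb]] := prim dva dvb bal.
  by move: hm; rewrite has_count -(size_mask ss) (cexpo_eq0 u0 v0).
have rest0 c : cexpo c (mask (map negb m) s) = mono0 _.
  apply: (@monoM_eq_l _ (cexpo c (mask m s))).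
  by rewrite split; case: c; rewrite ?ha ?hb ?ua ?vb.
have : 0 < size (mask (map negb m) s).
  by rewrite size_mask ?size_map // count_map -has_count has_predC.
by rewrite (cexpo_eq0 (rest0 false) (rest0 true)).
Qed.
End WalkConstruction.

Unset Implicit Arguments. Set Strict Implicit.
Local Open Scope ring_scope.

(* g = t^a - t^b with (a, b) primitive; the walk built from (a, b) starting
   from the empty walk has f_W = g, so the sign is 1 *)
Theorem mainTheorem2 (k : fieldType) (V : finType) (d : nat)
  (H : {set {set V}}) (hd : (0 < d)%N) (hH : uniform d H)
  (lt : rel (mono (edge H))) (hlt : term_order lt)
  (G : mpoly k (edge H) -> Prop)
  (hG : reduced_groebner lt (@in_toric k V H) G) :
  forall g, G g ->
    exists w : seq (edge H),
      [/\ monomial_walk w, primitive_walk w &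
          exists s : k, (s = 1 \/ s = -1) /\
            forall a, pcoef g a = s * walk_binom k w a].
Proof.
move=> g Gg.
have [a [b [lba tab gE prim]]] := gb_element_binomial hd hH hlt hG Gg.
have start c : monoM (cexpo c (coloured [::])) (if c then b else a) = if c then b else a.
  by rewrite cexpo_nil mono0M.
have [w [ev ea eb cw]] := walk_complete hd hH tab prim (w := [::]) (erefl (msize a)) isT
  (start false) (start true) erefl (@walk_conn_nil _ _).
have w_nonempty : (0 < size w)%N.
  case: w ea eb {ev cw} => [|//] ea eb.
  by move: lba; rewrite -ea -eb !cexpo_nil (negbTE (lt_irr hlt _)).
exists w; split.
- by split => //; apply/balancedP; rewrite ea eb.
- exact: (walk_primitive prim ea eb).
- exists 1; split; first by left.
  by move=> x; rewrite mul1r gE /walk_binom -ea -eb.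
Qed.
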